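(* For all $\lambda_0,\lambda_1\in\Lambda$, $|h(\lambda_0)-h(\lambda_1)|\le\rho\,|\lambda_0-\lambda_1|$.
   Context: Let $p$ be a prime, $\mathbb C_p$ with $p$-adic absolute value, $|p|=1/p$. $\Lambda=\{\lambda\in\mathbb C_p:|\lambda-1|<1\}$, $P_\lambda(z)=\frac{\lambda}{p}z^p+\left(1-\frac{\lambda}{p}\right)z^{p+1}$, $\rho=p^{-1/(p-1)}$. Fix $\hat r\in|\mathbb C_p^*|$, $\hat r>1$, $B=\{z:|z|\le\hat r\}$; $\mathcal H(B)$ is the ring of power series $\sum a_iz^i$ convergent on $B$ with norm $\|f\|_B=\sup_i|a_i|\hat r^{\,i}$. Fix $Q\in\mathcal H(B)$ with $\|Q\|_B<\rho$, $Q^*_\lambda=P_\lambda+Q$, and let $h(\lambda)$ be the unique fixed point of $Q^*_\lambda$ in $\{z:|z-1|\le|Q(1)|/p\}$. *)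

From mathcomp Require Import all_boot all_order all_algebra.
From mathcomp Require Import all_classical all_reals.
From mathcomp Require Import exp.
Set Implicit Arguments. Unset Strict Implicit. Unset Printing Implicit Defensive.
Import Order.TTheory GRing.Theory Num.Theory.
Local Open Scope ring_scope.
Local Open Scope classical_set_scope.

Definition is_nonarch_abs (R : realType) (K : fieldType) (a : K -> R) : Prop :=
  [/\ forall x, 0 <= a x,
      forall x, a x = 0 <-> x = 0,
      forall x y, a (x * y) = a x * a y &
      forall x y, a (x + y) <= Num.max (a x) (a y)].

Definition abs_cvg (R : realType) (K : fieldType) (a : K -> R)
  (u : nat -> K) (l : K) : Prop :=
  forall eps : R, 0 < eps -> exists N : nat, forall n, (N <= n)%N -> a (u n - l) < eps.

Definition abs_cauchy (R : realType) (K : fieldType) (a : K -> R)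
  (u : nat -> K) : Prop :=
  forall eps : R, 0 < eps -> exists N : nat,
    forall m n, (N <= m)%N -> (N <= n)%N -> a (u m - u n) < eps.

Definition abs_complete (R : realType) (K : fieldType) (a : K -> R) : Prop :=
  forall u, abs_cauchy a u -> exists l, abs_cvg a u l.

Definition Cp_like (R : realType) (K : closedFieldType) (a : K -> R) (p : nat) : Prop :=
  [/\ is_nonarch_abs a, abs_complete a & a (p%:R) = (p%:R : R)^-1].

Definition rho (R : realType) (p : nat) : R := (p%:R : R) `^ (- (p.-1%:R)^-1).

Definition ps_sum (R : realType) (K : fieldType) (a : K -> R)
  (q : nat -> K) (z s : K) : Prop :=
  abs_cvg a (fun n => \sum_(i < n) q i * z ^+ i) s.

(* q lies in H(B), B = {|z| <= r}: |q_i| r^i -> 0. *)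
Definition in_HB (R : realType) (K : fieldType) (a : K -> R) (r : R)
  (q : nat -> K) : Prop :=
  forall eps : R, 0 < eps -> exists N : nat, forall i, (N <= i)%N -> a (q i) * r ^+ i < eps.

Definition normB (R : realType) (K : fieldType) (a : K -> R) (r : R)
  (q : nat -> K) : R := sup [set a (q i) * r ^+ i | i in [set: nat]].

Definition Plam (K : fieldType) (p : nat) (lam z : K) : K :=
  lam / p%:R * z ^+ p + (1 - lam / p%:R) * z ^+ p.+1.

(* h is a fixed point of Q*_lambda = P_lambda + Q lying in the disk
   |z - 1| <= |Q(1)|/p, where Q1 is the value Q(1). *)
Definition fixed_in_disk (R : realType) (K : fieldType) (a : K -> R) (p : nat)
  (q : nat -> K) (Q1 lam h : K) : Prop :=
  a (h - 1) <= a Q1 / p%:R /\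
  exists Qh, ps_sum a q h Qh /\ Plam p lam h + Qh = h.

(* Subtracting the fixed-point equations of Q*_{lam0} at h0 and Q*_{lam1} at h1
   isolates the term (lam0/p) h1^p (h0 - h1), of absolute value p |h0 - h1|
   since |lam0| = |h1| = 1. The Q-part of the difference is at most
   ||Q||_B |h0 - h1| <= |h0 - h1| and the Taylor remainder of P is at most
   |h0 - h1|, both below p |h0 - h1| when h0 <> h1; the lam-part is at most
   |lam0 - lam1| |Q(1)| because |h1 - 1| <= |Q(1)|/p. The ultrametric inequality
   gives p |h0 - h1| <= |lam0 - lam1| |Q(1)| <= rho |lam0 - lam1|. *)
From mathcomp Require Import all_boot all_order all_algebra.
From mathcomp Require Import all_classical all_reals.
From mathcomp Require Import exp.
From mathcomp Require Import ring lra.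
Import Order.TTheory GRing.Theory Num.Theory.
Local Open Scope ring_scope.
Set Implicit Arguments. Unset Strict Implicit.

Section NonArchimedeanAbs.
Variables (R : realType) (K : fieldType) (a : K -> R).
Hypothesis Ha : is_nonarch_abs a.

Lemma absv_ge0 x : 0 <= a x. Proof. by case: Ha. Qed.
Lemma absv_eq0 x : a x = 0 <-> x = 0. Proof. by case: Ha. Qed.
Lemma absvM x y : a (x * y) = a x * a y. Proof. by case: Ha. Qed.
Lemma absvD x y : a (x + y) <= Num.max (a x) (a y). Proof. by case: Ha. Qed.

Lemma absv0 : a 0 = 0. Proof. exact/absv_eq0. Qed.

Lemma absv1 : a 1 = 1.
Proof.
have a1_neq0 : a 1 != 0 by apply/eqP => /absv_eq0/eqP; rewrite oner_eq0.
by apply: (mulfI a1_neq0); rewrite -absvM !mulr1.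
Qed.

Lemma absvN x : a (- x) = a x.
Proof.
have aN1 : a (-1) = 1.
  have sq : a (-1) * a (-1) = 1 by rewrite -absvM mulrNN mulr1 absv1.
  by have := absv_ge0 (-1); nra.
by rewrite -mulN1r absvM aN1 mul1r.
Qed.

Lemma absvX x n : a (x ^+ n) = a x ^+ n.
Proof. by elim: n => [|n IH]; rewrite ?expr0 ?absv1 // !exprS absvM IH. Qed.

Lemma absvV x : a x^-1 = (a x)^-1.
Proof.
have [->|x_neq0] := eqVneq x 0; first by rewrite invr0 absv0 invr0.
have ax_neq0 : a x != 0 by apply/eqP => /absv_eq0/eqP; rewrite (negbTE x_neq0).
by apply: (mulfI ax_neq0); rewrite -absvM !divff // absv1.
Qed.

Lemma absvD_le x y c : a x <= c -> a y <= c -> a (x + y) <= c.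
Proof. by move=> hx hy; apply: le_trans (absvD x y) _; rewrite ge_max hx hy. Qed.

Lemma absvD_lt x y c : a x < c -> a y < c -> a (x + y) < c.
Proof. by move=> hx hy; apply: le_lt_trans (absvD x y) _; rewrite gt_max hx hy. Qed.

Lemma absvB_le x y c : a x <= c -> a y <= c -> a (x - y) <= c.
Proof. by move=> hx hy; apply: absvD_le; rewrite ?absvN. Qed.

Lemma absv_sum_le I (r : seq I) (P : pred I) (F : I -> K) (c : R) : 0 <= c ->
  (forall i, P i -> a (F i) <= c) -> a (\sum_(i <- r | P i) F i) <= c.
Proof.
move=> c_ge0 hF; apply: (big_ind (fun s => a s <= c)) => //; last by move=> x y hx hy; apply: absvD_le.
by rewrite absv0.
Qed.

Lemma absv_near1 z : a (z - 1) < 1 -> a z = 1.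
Proof.
move=> hz; apply/le_anti/andP; split.
  by rewrite -[z](subrK 1); apply: absvD_le; rewrite ?absv1 // ltW.
rewrite leNgt; apply/negP => az_lt1.
have : a (z - (z - 1)) < 1 by apply: absvD_lt; rewrite ?absvN.
by rewrite opprB subrKC absv1 ltxx.
Qed.

Lemma absvXB_le x y n : a x <= 1 -> a y <= 1 -> a (x ^+ n - y ^+ n) <= a (x - y).
Proof.
move=> ax_le1 ay_le1; elim: n => [|n IH]; first by rewrite !expr0 subrr absv0 absv_ge0.
have -> : x ^+ n.+1 - y ^+ n.+1 = x * (x ^+ n - y ^+ n) + (x - y) * y ^+ n
  by rewrite !exprS; ring.
apply: absvD_le; rewrite absvM.
  by rewrite -[leRHS]mul1r ler_pM ?absv_ge0.
by rewrite absvX -[leRHS]mulr1 ler_pM ?absv_ge0 ?exprn_ge0 ?exprn_ile1 ?absv_ge0.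
Qed.

Lemma abs_cvg_le u v l m c : abs_cvg a u l -> abs_cvg a v m ->
  (forall n, a (u n - v n) <= c) -> a (l - m) <= c.
Proof.
move=> cvg_u cvg_v huv; rewrite leNgt; apply/negP => c_lt.
have e_gt0 : 0 < a (l - m) := le_lt_trans (le_trans (absv_ge0 _) (huv 0%N)) c_lt.
have [N1 H1] := cvg_u _ e_gt0; have [N2 H2] := cvg_v _ e_gt0.
set n := maxn N1 N2.
have : a (- (u n - l) + (u n - v n) + (v n - m)) < a (l - m).
  apply: absvD_lt; last by apply: H2; rewrite leq_maxr.
  apply: absvD_lt; last exact: le_lt_trans (huv n) c_lt.
  by rewrite absvN; apply: H1; rewrite leq_maxl.
by rewrite opprB addrA subrKA subrK ltxx.
Qed.

Section PowerSeries.
Variables (q : nat -> K) (M : R).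
Hypotheses (M_ge0 : 0 <= M) (q_le : forall i, a (q i) <= M).

Lemma ps_sum_le z s : a z <= 1 -> ps_sum a q z s -> a s <= M.
Proof.
move=> az_le1 sum_s; rewrite -[s]subr0.
apply: (abs_cvg_le sum_s (v := fun=> 0)) => [e e_gt0|n].
  by exists 0%N => n _; rewrite subrr absv0.
rewrite subr0; apply: absv_sum_le => // i _.
by rewrite absvM absvX -[leRHS]mulr1 ler_pM ?q_le ?exprn_ile1 ?exprn_ge0 ?absv_ge0.
Qed.

Lemma ps_sum_lipschitz x y s t : a x <= 1 -> a y <= 1 ->
  ps_sum a q x s -> ps_sum a q y t -> a (s - t) <= M * a (x - y).
Proof.
move=> ax_le1 ay_le1 sum_s sum_t; apply: (abs_cvg_le sum_s sum_t) => n.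
rewrite -sumrB; apply: absv_sum_le => [|i _]; first by rewrite mulr_ge0 ?absv_ge0.
by rewrite -mulrBr absvM ler_pM ?absv_ge0 ?absvXB_le.
Qed.

End PowerSeries.

End NonArchimedeanAbs.

Lemma in_HB_has_sup (R : realType) (K : fieldType) (a : K -> R) r q :
  is_nonarch_abs a -> 0 <= r -> in_HB a r q ->
  has_sup [set a (q i) * r ^+ i | i in [set: nat]].
Proof.
move=> Ha r_ge0 q_HB; split; first by exists (a (q 0%N) * r ^+ 0); exists 0%N.
have [N HN] := q_HB 1 ltr01.
have term_ge0 i : 0 <= a (q i) * r ^+ i by rewrite mulr_ge0 ?(absv_ge0 Ha) ?exprn_ge0.
exists (1 + \sum_(i < N) a (q i) * r ^+ i) => _ [i _ <-].
have [i_lt|N_le] := ltnP i N.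
  by rewrite (bigD1 (Ordinal i_lt)) //= addrCA lerDl addr_ge0 ?sumr_ge0.
by rewrite ler_wpDr ?sumr_ge0 // ltW ?HN.
Qed.

Lemma in_HB_coef_le_normB (R : realType) (K : fieldType) (a : K -> R) r q i :
  is_nonarch_abs a -> 1 <= r -> in_HB a r q -> a (q i) <= normB a r q.
Proof.
move=> Ha r_ge1 q_HB; apply: le_trans (_ : a (q i) * r ^+ i <= _).
  by rewrite -[leLHS]mulr1 ler_wpM2l ?(absv_ge0 Ha) ?exprn_ege1.
apply: sup_upper_bound; last by exists i.
by apply: in_HB_has_sup; rewrite ?(le_trans ler01).
Qed.

Lemma rho_le1 (R : realType) p : (1 < p)%N -> rho R p <= 1.
Proof.
move=> p_gt1; rewrite /rho -[leRHS](powRr0 (p%:R : R)).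
by rewrite ler_powR ?ler1n 1?ltnW // oppr_le0 invr_ge0 ler0n.
Qed.

Lemma Plam_fixed_pointsB (K : fieldType) p (lam0 lam1 h0 h1 Qh0 Qh1 : K) :
  Plam p lam0 h0 + Qh0 = h0 -> Plam p lam1 h1 + Qh1 = h1 ->
  lam0 / p%:R * h1 ^+ p * (h0 - h1) =
    (Qh0 - Qh1)
    - ((h0 - h1) - (h0 ^+ p.+1 - h1 ^+ p.+1)
       + lam0 / p%:R * (h0 ^+ p - h1 ^+ p) * (h0 - 1))
    - (lam0 - lam1) / p%:R * h1 ^+ p * (h1 - 1).
Proof.
move=> /(canRL (addKr _)) -> /(canRL (addKr _)) ->.
by rewrite /Plam !exprS; ring.
Qed.

Section FixedPoints.
Variables (R : realType) (K : fieldType) (a : K -> R) (p : nat).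
Hypotheses (Ha : is_nonarch_abs a) (p_gt1 : (1 < p)%N) (ap : a p%:R = (p%:R)^-1).
Variables (q : nat -> K) (M : R) (Q1 : K).
Hypotheses (q_le : forall i, a (q i) <= M) (M_le1 : M <= 1) (HQ1 : ps_sum a q 1 Q1).

Let p_gt1R : 1 < (p%:R : R). Proof. by rewrite ltr1n. Qed.
Let M_ge0 : 0 <= M. Proof. exact: le_trans (absv_ge0 Ha _) (q_le 0). Qed.
Let Q1_le : a Q1 <= M. Proof. by apply: (ps_sum_le Ha) HQ1; rewrite ?absv1. Qed.

Lemma absvVp : a (p%:R)^-1 = p%:R.
Proof. by rewrite absvV // ap invrK. Qed.

Lemma fixed_in_disk_mul_p lam h :
  fixed_in_disk a p q Q1 lam h -> p%:R * a (h - 1) <= a Q1.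
Proof. by case=> h_near _; rewrite mulrC -ler_pdivlMr // (lt_trans ltr01). Qed.

Lemma fixed_in_disk_unit lam h : fixed_in_disk a p q Q1 lam h -> a h = 1.
Proof.
move=> /fixed_in_disk_mul_p hQ1; apply: (absv_near1 Ha).
rewrite -(ltr_pM2l (lt_trans ltr01 p_gt1R)) mulr1 (le_lt_trans hQ1) //.
exact: le_lt_trans Q1_le (le_lt_trans M_le1 p_gt1R).
Qed.

Lemma fixed_in_disk_dist lam0 lam1 h0 h1 :
  a (lam0 - 1) < 1 ->
  fixed_in_disk a p q Q1 lam0 h0 -> fixed_in_disk a p q Q1 lam1 h1 ->
  p%:R * a (h0 - h1) <= a (lam0 - lam1) * a Q1.
Proof.
move=> lam0_near Hh0 Hh1.
have ah0 := fixed_in_disk_unit Hh0; have ah1 := fixed_in_disk_unit Hh1.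
have lam0_unit := absv_near1 Ha lam0_near.
have h0_near := fixed_in_disk_mul_p Hh0; have h1_near := fixed_in_disk_mul_p Hh1.
case: Hh0 Hh1 => _ [Qh0 [sum0 E0]] [_ [Qh1 [sum1 E1]]].
set d := a (h0 - h1).
have d_ge0 : 0 <= d := absv_ge0 Ha _.
have powB_le n : a (h0 ^+ n - h1 ^+ n) <= d by rewrite absvXB_le ?ah0 ?ah1.
have Q_part : a (Qh0 - Qh1) <= M * d.
  by apply: (ps_sum_lipschitz Ha) sum0 sum1; rewrite ?ah0 ?ah1.
have P_part : a ((h0 - h1) - (h0 ^+ p.+1 - h1 ^+ p.+1)
                 + lam0 / p%:R * (h0 ^+ p - h1 ^+ p) * (h0 - 1)) <= d.
  apply: (absvD_le Ha); first exact: (absvB_le Ha).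
  rewrite !(absvM Ha) absvVp lam0_unit mul1r -mulrA mulrCA -[leRHS]mulr1.
  by rewrite ler_pM ?mulr_ge0 ?(absv_ge0 Ha) ?ler0n ?powB_le ?(le_trans h0_near) ?(le_trans Q1_le).
have lam_part : a ((lam0 - lam1) / p%:R * h1 ^+ p * (h1 - 1))
                  <= a (lam0 - lam1) * a Q1.
  rewrite !(absvM Ha) absvVp (absvX Ha) ah1 expr1n mulr1 -mulrA.
  by rewrite ler_wpM2l ?(absv_ge0 Ha) // mulrC.
rewrite leNgt; apply/negP => lam_lt.
have d_gt0 : 0 < d.
  rewrite lt_def d_ge0 andbT; apply: contraTneq lam_lt => ->.
  by rewrite mulr0 -leNgt mulr_ge0 ?(absv_ge0 Ha).
have d_lt : d < p%:R * d by rewrite ltr_pMl.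
have : a (lam0 / p%:R * h1 ^+ p * (h0 - h1)) < p%:R * d.
  rewrite (Plam_fixed_pointsB E0 E1).
  apply: (absvD_lt Ha); last by rewrite (absvN Ha); exact: le_lt_trans lam_part lam_lt.
  apply: (absvD_lt Ha); last by rewrite (absvN Ha); exact: le_lt_trans P_part d_lt.
  exact: le_lt_trans Q_part (le_lt_trans (ler_piMl d_ge0 M_le1) d_lt).
by rewrite !(absvM Ha) absvVp (absvX Ha) lam0_unit ah1 expr1n !mulr1 mul1r ltxx.
Qed.

End FixedPoints.

Theorem proposition3p4 (R : realType) (K : closedFieldType) (a : K -> R) (p : nat)
  (p_prime : prime p) (HK : Cp_like a p)
  (rhat : R) (rhat_val : exists z : K, z != 0 /\ a z = rhat) (rhat_gt1 : 1 < rhat)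
  (q : nat -> K) (q_HB : in_HB a rhat q) (q_norm : normB a rhat q < rho R p)
  (Q1 : K) (HQ1 : ps_sum a q 1 Q1)
  (lam0 lam1 : K) (Hl0 : a (lam0 - 1) < 1) (Hl1 : a (lam1 - 1) < 1)
  (h0 h1 : K) (Hh0 : fixed_in_disk a p q Q1 lam0 h0)
  (Hh1 : fixed_in_disk a p q Q1 lam1 h1) :
  a (h0 - h1) <= rho R p * a (lam0 - lam1).
Proof.
case: HK => Ha _ ap.
have p_gt1 := prime_gt1 p_prime.
have q_le i : a (q i) <= normB a rhat q by apply: in_HB_coef_le_normB; rewrite ?ltW.
have norm_le1 : normB a rhat q <= 1 by rewrite ltW ?(lt_le_trans q_norm) ?rho_le1.
have Q1_le_rho : a Q1 <= rho R p.
  have norm_ge0 := le_trans (absv_ge0 Ha _) (q_le 0%N).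
  by rewrite ltW // (le_lt_trans _ q_norm) // (ps_sum_le Ha norm_ge0 q_le _ HQ1) ?absv1.
have dist := fixed_in_disk_dist Ha p_gt1 ap q_le norm_le1 HQ1 Hl0 Hh0 Hh1.
rewrite mulrC (le_trans _ (le_trans dist _)) ?ler_wpM2l ?(absv_ge0 Ha) //.
by rewrite ler_peMl ?(absv_ge0 Ha) // ler1n ltnW.
Qed.
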